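(* Let $\{s_n\}_{n\ge 0}$ and $\{r_n\}_{n\ge 0}$ be the little and large Schröder numbers, i.e. the sequences satisfying $(n+2)z_{n+1}=3(2n+1)z_n-(n-1)z_{n-1}$ for $n\ge 1$, with initial values $s_0=s_1=1$ and $r_0=1$, $r_1=2$ respectively. Then both $\{s_n\}_{n\ge 0}$ and $\{r_n\}_{n\ge0}$ are log-convex.
   Context: A sequence $a_0,a_1,\ldots$ of nonnegative real numbers is log-convex if $a_{k-1}a_{k+1}\ge a_k^2$ for all $k\ge 1$. *)

From Stdlib Require Import Reals.
Open Scope R_scope.

Definition log_convex (a : nat -> R) : Prop :=
  (forall n : nat, 0 <= a n) /\
  (forall k : nat, (1 <= k)%nat -> a (k - 1)%nat * a (k + 1)%nat >= (a k) ^ 2).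

Definition schroder_rec (z : nat -> R) : Prop :=
  forall n : nat, (1 <= n)%nat ->
    (INR n + 2) * z (n + 1)%nat = 3 * (2 * INR n + 1) * z n - (INR n - 1) * z (n - 1)%nat.

(* The recurrence at n = 1 does not involve z_0, so z_2 = 3 z_1, and from there on
   the recurrence forces z_{n+1} >= 3 z_n.  Eliminating z_{n+2} and z_{n+3} between
   two consecutive instances of the recurrence gives
     (n+3)(n+4)(z_{n+1} z_{n+3} - z_{n+2}^2)
       = (n+1)(n+3)(z_n z_{n+2} - z_{n+1}^2) + z_{n+2} (9 z_{n+1} - 3 z_n),
   whose last term is nonnegative once z_n <= 3 z_{n+1}; hence log-convexity
   propagates from the single condition z_0 z_2 >= z_1^2, i.e. z_1 <= 3 z_0. *)

From Stdlib Require Import Reals Lra Lia Psatz.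
Open Scope R_scope.

Lemma schroder_rec_S (z : nat -> R) : schroder_rec z -> forall n : nat,
  (INR n + 3) * z (S (S n)) = 3 * (2 * INR n + 3) * z (S n) - INR n * z n.
Proof.
  intros Hz n.
  specialize (Hz (S n) ltac:(lia)).
  replace (S n + 1)%nat with (S (S n)) in Hz by lia.
  replace (S n - 1)%nat with n in Hz by lia.
  rewrite S_INR in Hz; lra.
Qed.

Lemma schroder_rec_2 (z : nat -> R) : schroder_rec z -> z 2%nat = 3 * z 1%nat.
Proof.
  intros Hz; pose proof (schroder_rec_S z Hz 0) as H0; simpl in H0; lra.
Qed.

Lemma schroder_growth (t a b c : R) :
  0 <= t -> a <= 3 * b ->
  (t + 3) * c = 3 * (2 * t + 3) * b - t * a -> 3 * b <= c.
Proof.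
  intros Ht Hab Hrec.
  assert (Hdiff : (t + 3) * (c - 3 * b) = t * (3 * b - a)) by lra.
  assert (0 <= (t + 3) * (c - 3 * b)) by (rewrite Hdiff; nra).
  nra.
Qed.

Lemma schroder_ratio (z : nat -> R) : schroder_rec z -> 0 < z 1%nat ->
  forall n : nat, 0 < z (S n) /\ 3 * z (S n) <= z (S (S n)).
Proof.
  intros Hz Hz1 n; induction n as [|n [Hpos Hgrow]].
  - rewrite (schroder_rec_2 z Hz); lra.
  - split; [lra|].
    apply (schroder_growth (INR (S n)) (z (S n))); [apply pos_INR | lra |].
    apply (schroder_rec_S z Hz).
Qed.

Lemma schroder_turan_identity (t a b c d : R) :
  (t + 3) * c = 3 * (2 * t + 3) * b - t * a ->
  (t + 4) * d = 3 * (2 * t + 5) * c - (t + 1) * b ->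
  (t + 3) * (t + 4) * (b * d - c ^ 2)
    = (t + 1) * (t + 3) * (a * c - b ^ 2) + c * (9 * b - 3 * a).
Proof.
  intros Hc Hd.
  replace ((t + 3) * (t + 4) * (b * d - c ^ 2))
    with ((t + 3) * b * ((t + 4) * d) - (t + 4) * c * ((t + 3) * c)) by ring.
  rewrite Hd, Hc; ring.
Qed.

Lemma schroder_turan_step (t a b c d : R) :
  0 <= t -> 0 <= c -> a <= 3 * b ->
  (t + 3) * c = 3 * (2 * t + 3) * b - t * a ->
  (t + 4) * d = 3 * (2 * t + 5) * c - (t + 1) * b ->
  a * c >= b ^ 2 -> b * d >= c ^ 2.
Proof.
  intros Ht Hc Hab Hrec_c Hrec_d Habc.
  pose proof (schroder_turan_identity t a b c d Hrec_c Hrec_d) as Hid.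
  assert (0 <= (t + 1) * (t + 3) * (a * c - b ^ 2)).
  { apply Rmult_le_pos; [apply Rmult_le_pos|]; lra. }
  assert (0 <= c * (9 * b - 3 * a)) by (apply Rmult_le_pos; lra).
  assert (0 <= (t + 3) * (t + 4) * (b * d - c ^ 2)) by lra.
  assert (0 < (t + 3) * (t + 4)) by (apply Rmult_lt_0_compat; lra).
  nra.
Qed.

Lemma schroder_log_convex (z : nat -> R) :
  schroder_rec z -> 0 <= z 0%nat -> 0 < z 1%nat ->
  z 0%nat <= 3 * z 1%nat -> z 1%nat <= 3 * z 0%nat ->
  log_convex z.
Proof.
  intros Hz Hz0 Hz1 Hlow Hup.
  pose proof (schroder_ratio z Hz Hz1) as Hratio.
  assert (Hturan : forall n, z n * z (S (S n)) >= z (S n) ^ 2).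
  { induction n as [|n IH].
    - rewrite (schroder_rec_2 z Hz); nra.
    - apply (schroder_turan_step (INR n) (z n)); try assumption.
      + apply pos_INR.
      + destruct (Hratio (S n)); lra.
      + destruct n as [|m]; [lra | destruct (Hratio m); lra].
      + apply (schroder_rec_S z Hz).
      + pose proof (schroder_rec_S z Hz (S n)) as Hrec.
        rewrite S_INR in Hrec; lra. }
  split.
  - intros [|n]; [lra | destruct (Hratio n); lra].
  - intros [|n] Hk; [lia|].
    replace (S n - 1)%nat with n by lia.
    replace (S n + 1)%nat with (S (S n)) by lia.
    apply Hturan.
Qed.

Theorem corollary3p13 (s r : nat -> R) :
  schroder_rec s -> s 0%nat = 1 -> s 1%nat = 1 ->
  schroder_rec r -> r 0%nat = 1 -> r 1%nat = 2 ->
  log_convex s /\ log_convex r.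
Proof.
  intros Hs s0 s1 Hr r0 r1.
  split; apply schroder_log_convex; auto; lra.
Qed.
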